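(* Let $(A,\mathfrak{g},\omega)$ be an $n$-plectic structure and let $f\in\mathcal{P}ois(A,\mathfrak{g},\omega)$ be a Poisson cotensor. Then $\ker(\omega)\subset\ker(f)$. Moreover, if $y,y'$ are tensors with $i_y\omega=f$ and $i_{y'}\omega=f$, then $y-y'\in\ker(\omega)$ and $i_yg=i_{y'}g$ for all $g\in\mathcal{P}ois(A,\mathfrak{g},\omega)$. Similarly, if $x,x'$ are tensors with $i_x\omega=df$ and $i_{x'}\omega=df$, then $x-x'\in\ker(\omega)$ and $i_xg=i_{x'}g$ for all $g\in\mathcal{P}ois(A,\mathfrak{g},\omega)$.
   Context: A Lie Rinehart pair $(A,\mathfrak{g})$ consists of a commutative associative unital $\mathbb{R}$-algebra $A$ and a real Lie algebra $\mathfrak{g}$ that is an $A$-module, together with a Lie algebra morphism (anchor) $D:\mathfrak{g}\to\mathrm{Der}(A)$, $x\mapsto D_x$, such that $[x,a y]=D_x(a)y+a[x,y]$ for all $x,y\in\mathfrak{g}$ and $a\in A$. It is torsionless if the canonical map $\mathfrak{g}\to\mathfrak{g}^{\vee\vee}$, where $\mathfrak{g}^\vee=\mathrm{Hom}_A(\mathfrak{g},A)$, is injective. Set $X(\mathfrak{g},A)=\bigoplus_{k\ge0}\Lambda^k_A\mathfrak{g}$ (tensors, $\Lambda^0=A$) and $\Omega(\mathfrak{g},A)=\bigoplus_{k\ge0}\Lambda^k_A\mathfrak{g}^\vee$ (cotensors), each with its exterior product $\wedge$. Tensor grading: $|x|=k$ for $x\in\Lambda^k_A\mathfrak{g}$ and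 $|f|=-k$ for $f\in\Lambda^k_A\mathfrak{g}^\vee$. The natural pairing is the $A$-bilinear map with $\langle f_1\wedge\cdots\wedge f_k,x_1\wedge\cdots\wedge x_k\rangle=\sum_{s\in S_k}\mathrm{sgn}(s)\langle f_{s(1)},x_1\rangle\cdots\langle f_{s(k)},x_k\rangle$ (where $\langle f,x\rangle=f(x)$ for $f\in\mathfrak{g}^\vee,x\in\mathfrak{g}$ and $\langle a,b\rangle=ab$ on $A$), and zero between components of different exterior degree. For a tensor $x$ the right contraction $i_x:\Omega\to\Omega$ is determined by $\langle i_xf,z\rangle=\langle f,x\wedge z\rangle$ for all tensors $z$. The de Rham differential is given for $f\in\Lambda^k_A\mathfrak{g}^\vee$ by $df(x_0\wedge\cdots\wedge x_k)=\sum_j(-1)^jD_{x_j}(f(x_0\wedge\cdots\widehat{x_j}\cdots\wedge x_k))+\sum_{i<j}(-1)^{i+j}f([x_i,x_j]\wedge x_0\wedge\cdots\widehat{x_i}\cdots\widehat{x_j}\cdots\wedge x_k)$. For a cotensor $f$, $\ker(f)=\{x\in X(\mathfrak{g},A): i_xf=0\}$. An $n$-plectic structure $(A,\mathfrak{g},\omega)$ is a torsionless Lie Rinehart pair with $\omega\in\Lambda^{n+1}_A\mathfrak{g}^\vee$ and $d\omega=0$. A tensor $x$ is a Hamilton tensor associated to the (Hamilton) cotensor $f$ if $i_x\omega=df$. A Poisson cotensor is a Hamilton cotensor $f$ for which there is a tensor $y$ with $i_y\omega=f$ ($y$ is called a Poisson constraint associated to $f$); $\mathcal{P}ois(A,\mathfrak{g},\omega)$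 denotes the set of Poisson cotensors. *)

From HB Require Import structures.
From mathcomp Require Import all_boot all_order all_algebra.
From mathcomp Require Import reals.
Set Implicit Arguments. Unset Strict Implicit. Unset Printing Implicit Defensive.
Import Order.TTheory GRing.Theory Num.Theory.
Local Open Scope ring_scope.

Section LR.
Variables (R : realType) (A : comAlgType R) (g : lmodType A).

(* Lie Rinehart pair: real Lie algebra g (real structure via r%:A), which is an
   A-module, with anchor D : g -> Der(A) a Lie algebra morphism, and the
   Leibniz compatibility [x, a y] = D_x(a) y + a [x, y]. *)
Record is_LieRinehart (br : g -> g -> g) (D : g -> A -> A) : Prop := {
  br_linl : forall (r : R) x y z, br (r%:A *: x + y) z = r%:A *: br x z + br y z;
  br_linr : forall (r : R) x y z, br z (r%:A *: x + y) = r%:A *: br z x + br z y;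
  br_alt : forall x, br x x = 0;
  br_jacobi : forall x y z, br x (br y z) + br y (br z x) + br z (br x y) = 0;
  D_linA : forall x (r : R) a b, D x (r *: a + b) = r *: D x a + D x b;
  D_leibniz : forall x a b, D x (a * b) = D x a * b + a * D x b;
  D_ling : forall (r : R) x y a, D (r%:A *: x + y) a = r *: D x a + D y a;
  D_br : forall x y a, D (br x y) a = D x (D y a) - D y (D x a);
  LR_compat : forall x y a, br x (a *: y) = D x a *: y + a *: br x y
}.

Definition Alinear (phi : g -> A) : Prop :=
  forall a x y, phi (a *: x + y) = a * phi x + phi y.

(* torsionless: g -> g^{vee vee} injective *)
Definition torsionless : Prop :=
  forall x : g, (forall phi, Alinear phi -> phi x = 0) -> x = 0.

(* Tensors X(g,A): finite formal A-combinations of decomposable wedges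
   x_1 /\ ... /\ x_k (the list has length k = exterior degree). *)
Definition tensor := seq (A * seq g).

Definition tsub (x x' : tensor) : tensor :=
  x ++ [seq (- p.1, p.2) | p <- x'].

(* Cotensors Omega(g,A), as functions on decomposable wedges: the degree-k
   component is the restriction to lists of length k, which must be
   A-multilinear and alternating; finitely many components are nonzero. *)
Definition is_cotensor (F : seq g -> A) : Prop :=
  [/\ (forall s1 s2 a x y,
         F (s1 ++ (a *: x + y) :: s2) = a * F (s1 ++ x :: s2) + F (s1 ++ y :: s2)),
      (forall s i j, (i < j < size s)%N -> nth 0 s i = nth 0 s j -> F s = 0)
    & exists N, forall s, (N < size s)%N -> F s = 0].

Definition is_cotensor_deg (k : nat) (F : seq g -> A) : Prop :=
  is_cotensor F /\ forall s, size s != k -> F s = 0.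

Definition pairing (F : seq g -> A) (t : tensor) : A :=
  \sum_(p <- t) p.1 * F p.2.

(* right contraction: <i_x F, z> = <F, x /\ z> *)
Definition contr (x : tensor) (F : seq g -> A) : seq g -> A :=
  fun z => \sum_(p <- x) p.1 * F (p.2 ++ z).

Definition ker (F : seq g -> A) (x : tensor) : Prop :=
  forall z, contr x F z = 0.

Definition dropi (j : nat) (s : seq g) := take j s ++ drop j.+1 s.

Definition dR (br : g -> g -> g) (D : g -> A -> A) (F : seq g -> A) : seq g -> A :=
  fun s =>
    \sum_(j < size s) (-1) ^+ j * D (nth 0 s j) (F (dropi j s))
  + \sum_(i < size s) \sum_(j < size s | (i < j)%N)
      (-1) ^+ (i + j) * F (br (nth 0 s i) (nth 0 s j) :: dropi i (dropi j s)).

Definition is_hamilton_tensor br D (omega f : seq g -> A) (x : tensor) : Prop :=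
  contr x omega =1 dR br D f.

Definition is_hamilton br D (omega f : seq g -> A) : Prop :=
  is_cotensor f /\ exists x, is_hamilton_tensor br D omega f x.

Definition is_poisson br D (omega f : seq g -> A) : Prop :=
  is_hamilton br D omega f /\ exists y : tensor, contr y omega =1 f.

Definition nplectic br D (n : nat) (omega : seq g -> A) : Prop :=
  [/\ is_LieRinehart br D, torsionless, is_cotensor_deg n.+1 omega
    & dR br D omega =1 (fun _ => 0)].

End LR.

(* If omega is homogeneous of degree k, contracting with a tensor y commutes
   with contracting with x up to the sign (-1)^(|x| |y|) on each wedge.
   Hence i_x omega = 0 forces i_x (i_y omega) = 0, and every Poisson cotensor
   f = i_y omega vanishes under contraction with ker(omega).  Two tensors
   with the same contraction against omega differ by an element of
   ker(omega), so their contractions against any Poisson cotensor agree. *)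
From HB Require Import structures.
From mathcomp Require Import all_boot all_order all_algebra.
From mathcomp Require Import reals.
From mathcomp Require Import zify ring.
Set Implicit Arguments. Unset Strict Implicit. Unset Printing Implicit Defensive.
Import GRing.Theory.
Local Open Scope ring_scope.

Section AlternatingForm.
Variables (R : realType) (A : comAlgType R) (g : lmodType A).
Variable F : seq g -> A.
Hypothesis F_multilinear : forall s1 s2 a x y,
  F (s1 ++ (a *: x + y) :: s2) = a * F (s1 ++ x :: s2) + F (s1 ++ y :: s2).
Hypothesis F_alternating :
  forall s i j, (i < j < size s)%N -> nth 0 s i = nth 0 s j -> F s = 0.

Lemma F_additive s1 s2 x y :
  F (s1 ++ (x + y) :: s2) = F (s1 ++ x :: s2) + F (s1 ++ y :: s2).
Proof. by have := F_multilinear s1 s2 1 x y; rewrite scale1r mul1r. Qed.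

Lemma F_repeat s1 s2 x : F (s1 ++ x :: x :: s2) = 0.
Proof.
apply: (@F_alternating _ (size s1) (size s1).+1).
  by rewrite size_cat /=; lia.
by rewrite !nth_cat ltnn subnn ltnNge leqnSn /= subSnn.
Qed.

Lemma F_swap s1 s2 x y : F (s1 ++ x :: y :: s2) = - F (s1 ++ y :: x :: s2).
Proof.
have sum0 := F_repeat s1 s2 (x + y).
rewrite F_additive -[s1 ++ x :: _]cat_rcons -[s1 ++ y :: _]cat_rcons in sum0.
rewrite !F_additive !cat_rcons !F_repeat add0r addr0 in sum0.
by apply/eqP; rewrite -addr_eq0 sum0.
Qed.

Lemma F_move u v w x :
  F (u ++ x :: v ++ w) = (-1) ^+ size v * F (u ++ v ++ x :: w).
Proof.
elim: v u => [|b v IH] u /=; first by rewrite expr0 mul1r.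
by rewrite F_swap -!(cat_rcons b u) IH exprS mulN1r mulNr.
Qed.

Lemma F_swap_blocks t u v w :
  F (t ++ u ++ v ++ w) = (-1) ^+ (size u * size v) * F (t ++ v ++ u ++ w).
Proof.
elim: u t => [|a u IH] t /=; first by rewrite mul0n expr0 mul1r.
rewrite -(cat_rcons a t) IH cat_rcons catA -catA F_move.
by rewrite mulrA -exprD mulSn addnC.
Qed.

Lemma ker_contr k (F_homogeneous : forall s, size s != k -> F s = 0)
    (x y : tensor g) :
  ker F x -> ker (contr y F) x.
Proof.
move=> kerFx z; rewrite /contr.
under eq_bigr => p _ do rewrite mulr_sumr.
rewrite exchange_big /=; apply: big1 => q _.
(* Only wedges of total length k contribute, so the sign is independent of p. *)
pose sign : A := (-1) ^+ (size q.2 * (k - size q.2 - size z)).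
transitivity (\sum_(p <- x) q.1 * sign * (p.1 * F (p.2 ++ q.2 ++ z))).
  apply: eq_bigr => p _.
  rewrite (F_swap_blocks [::] q.2 p.2).
  have [size_k|] := eqVneq (size (p.2 ++ q.2 ++ z)) k; last first.
    by move=> /F_homogeneous ->; rewrite !mulr0.
  rewrite /sign; have -> : (k - size q.2 - size z = size p.2)%N.
    by move: size_k; rewrite !size_cat; lia.
  ring.
by rewrite -mulr_sumr [X in _ * X]kerFx mulr0.
Qed.

End AlternatingForm.

Lemma contr_tsub (R : realType) (A : comAlgType R) (g : lmodType A)
    (x x' : tensor g) (F : seq g -> A) z :
  contr (tsub x x') F z = contr x F z - contr x' F z.
Proof.
rewrite /contr /tsub big_cat big_map -sumrN.
by congr (_ + _); apply: eq_bigr => p _; rewrite mulNr.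
Qed.

Lemma ker_tsub_contr_eq (R : realType) (A : comAlgType R) (g : lmodType A)
    (x x' : tensor g) (F h : seq g -> A) :
  contr x F =1 h -> contr x' F =1 h -> ker F (tsub x x').
Proof. by move=> xh x'h z; rewrite contr_tsub xh x'h subrr. Qed.

Section NPlectic.
Variables (R : realType) (A : comAlgType R) (g : lmodType A).
Variables (br : g -> g -> g) (D : g -> A -> A) (n : nat) (omega : seq g -> A).
Hypothesis omega_nplectic : nplectic br D n omega.

Lemma ker_poisson f x :
  is_poisson br D omega f -> ker omega x -> ker f x.
Proof.
case: omega_nplectic => _ _ [[omega_lin omega_alt _] omega_hom] _.
move=> [_ [y f_def]] /(ker_contr omega_lin omega_alt omega_hom y) kerx z.
by rewrite -(kerx z); apply: eq_bigr => p _; rewrite f_def.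
Qed.

Lemma contr_poisson_eq (x x' : tensor g) f :
  ker omega (tsub x x') -> is_poisson br D omega f -> contr x f =1 contr x' f.
Proof.
move=> kerxx' poisf z; apply/eqP; rewrite -subr_eq0 -contr_tsub.
by rewrite (ker_poisson poisf kerxx').
Qed.

End NPlectic.

Theorem mainTheorem1 (R : realType) (A : comAlgType R) (g : lmodType A)
  (br : g -> g -> g) (D : g -> A -> A) (n : nat) (omega : seq g -> A) :
  nplectic br D n omega ->
  forall f : seq g -> A, is_poisson br D omega f ->
  (forall x : tensor g, ker omega x -> ker f x) /\
  (forall y y' : tensor g, contr y omega =1 f -> contr y' omega =1 f ->
     ker omega (tsub y y') /\
     forall g0, is_poisson br D omega g0 -> contr y g0 =1 contr y' g0) /\
  (forall x x' : tensor g, contr x omega =1 dR br D f -> contr x' omega =1 dR br D f ->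
     ker omega (tsub x x') /\
     forall g0, is_poisson br D omega g0 -> contr x g0 =1 contr x' g0).
Proof.
move=> omega_nplectic f poisf.
have same_contr (x x' : tensor g) h : contr x omega =1 h -> contr x' omega =1 h ->
    ker omega (tsub x x') /\
    forall g0, is_poisson br D omega g0 -> contr x g0 =1 contr x' g0.
  move=> xh x'h; have kerxx' := ker_tsub_contr_eq xh x'h.
  by split=> // g0 /(contr_poisson_eq omega_nplectic kerxx').
split=> [x /(ker_poisson omega_nplectic poisf) //|].
by split=> x x'; apply: same_contr.
Qed.
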